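(* For every integer $r\geq 2$, $$\sum_{M\geq1}h_r(M)z^M=\frac{z+z^2+\cdots+z^{r-1}}{1-z-z^2-\cdots-z^r}.$$
   Context: The perimeter of a nonempty partition $\lambda$ with largest part $\lambda_1$ and $\ell(\lambda)$ parts is $\lambda_1+\ell(\lambda)-1$. For $r\geq2$, $h_r(M)$ is the number of partitions with perimeter $M$ in which every part value occurs fewer than $r$ times. *)

From mathcomp Require Import all_boot all_order all_algebra.
Set Implicit Arguments. Unset Strict Implicit. Unset Printing Implicit Defensive.
Import GRing.Theory Num.Theory.

Definition is_partition (s : seq nat) : bool :=
  [&& s != [::], sorted geq s & all (fun x => 0 < x) s].

Definition perimeter (s : seq nat) : nat := head 0 s + size s - 1.

Definition mult_lt (r : nat) (s : seq nat) : bool :=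
  all (fun x => count_mem x s < r) s.

Definition hr_pred (r M : nat) (s : seq nat) : bool :=
  [&& is_partition s, perimeter s == M & mult_lt r s].

(* h_r(M): number of such partitions.  A partition of perimeter M has
   length <= M and all parts <= M, so it is enumerated (exactly once) as
   an n-tuple of elements of 'I_(M+1) with n <= M. *)
Definition h (r M : nat) : nat :=
  \sum_(n < M.+1) #|[set t : n.-tuple 'I_M.+1 | hr_pred r M (map val t)]|.

Definition Hcoef (r M : nat) : int := if M == 0 then 0%R else Posz (h r M).

Definition den_coef (r k : nat) : int :=
  if k == 0 then 1%R else if k <= r then (-1)%R else 0%R.

Definition num_coef (r k : nat) : int :=
  if (1 <= k) && (k <= r.-1) then 1%R else 0%R.

From mathcomp Require Import all_boot all_algebra zify.
Set Implicit Arguments. Unset Strict Implicit. Unset Printing Implicit Defensive.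

(* Sort the partitions counted by h_r(M) by their largest part x.  If x = 1
   the partition is 1^M, admissible iff M < r.  If x > 1 and x - 1 is not a
   part, lowering every part equal to x by one is a bijection onto the
   partitions counted by h_r(M - 1).  If x - 1 is a part and x occurs j times
   (1 <= j < r), deleting the j largest parts is a bijection onto those counted
   by h_r(M - 1 - j).  Hence h_r(M) = h_r(M - 1) + ... + h_r(M - r) + [0 < M < r],
   which is the coefficientwise form of
   (1 - z - ... - z^r) H(z) = z + ... + z^(r-1). *)

Lemma count_eq_size_bij (T1 T2 : eqType) (L1 : seq T1) (L2 : seq T2)
    (f : T2 -> T1) (P : pred T1) :
  uniq L1 -> uniq L2 -> {in L2 &, injective f} ->
  (forall x, x \in L2 -> (f x \in L1) && P (f x)) ->
  (forall y, y \in L1 -> P y -> exists2 x, x \in L2 & y = f x) ->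
  count P L1 = size L2.
Proof.
move=> uL1 uL2 f_inj f_in f_onto.
rewrite -size_filter -(size_map f L2); apply: perm_size.
apply: uniq_perm; [exact: filter_uniq | by rewrite map_inj_in_uniq |].
move=> y; rewrite mem_filter; apply/andP/mapP.
  by case=> Py yL1; case: (f_onto y yL1 Py) => x xL2 ->; exists x.
by case=> x xL2 ->; case/andP: (f_in x xL2).
Qed.

Lemma sum_count_fibers (T : eqType) (L : seq T) (P : pred T) (f : T -> nat) k :
  {in L, forall s, P s -> f s < k} ->
  \sum_(j < k) count (fun s => P s && (f s == j)) L = count P L.
Proof.
elim: L => [|x L IH] f_lt /=; first by rewrite big1.
rewrite big_split /= IH; last by move=> s sL; apply: f_lt; rewrite inE sL orbT.
congr (_ + _); case Px: (P x) => /=; last by rewrite big1.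
have fx_lt : f x < k by apply: f_lt; rewrite ?inE ?eqxx.
rewrite (bigD1 (Ordinal fx_lt)) //= eqxx big1 // => j /negbTE.
by rewrite eq_sym -val_eqE /= => ->.
Qed.

Lemma count_predI_predC (T : Type) (a b : pred T) (s : seq T) :
  count (predI b a) s + count (predI (predC b) a) s = count a s.
Proof. by rewrite -!count_filter count_predC size_filter. Qed.

Lemma sum_ord_cond_widen (f : nat -> nat) M r : (forall k, M <= k -> f k = 0) ->
  \sum_(k < M | k < r) f k = \sum_(k < r) f k.
Proof.
move=> f_eq0; rewrite (big_ord_widen_cond (M + r) (fun k => k < r)) ?leq_addr //.
rewrite (big_ord_widen (M + r)) ?leq_addl // big_mkcondr; apply: eq_bigr => k _.
by case: ltnP => // /f_eq0 ->.
Qed.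

Lemma card_tuple_set (M n : nat) (P : pred (seq nat)) (L : seq (seq nat)) :
  uniq L -> (forall s, (s \in L) = P s) -> (forall s, P s -> all (fun x => x <= M) s) ->
  #|[set t : n.-tuple 'I_M.+1 | P (map val t)]| = count (fun s => size s == n) L.
Proof.
move=> uL memL P_bounded; rewrite cardE; symmetry.
apply: (count_eq_size_bij (f := fun t : n.-tuple 'I_M.+1 => map val (val t))).
- exact: uL.
- exact: enum_uniq.
- by move=> t1 t2 _ _ /(inj_map val_inj) /val_inj.
- by move=> t; rewrite mem_enum inE memL => ->; rewrite size_map size_tuple eqxx.
move=> s; rewrite memL => Ps /eqP size_s.
have inordK_s : map val (map (@inord M) s) = s.
  rewrite -map_comp -[RHS]map_id; apply/eq_in_map => x xs /=.
  by apply: inordK; move/allP: (P_bounded _ Ps) => /(_ x xs).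
have size_t : size (map (@inord M) s) == n by rewrite size_map size_s.
by exists (Tuple size_t); rewrite // mem_enum inE /= inordK_s.
Qed.

Fixpoint words (m k : nat) : seq (seq nat) :=
  if k is k'.+1 then [::] :: [seq x :: w | x <- iota 0 m, w <- words m k']
  else [:: [::]].

Lemma in_words m k w : size w <= k -> all (fun x => x < m) w -> w \in words m k.
Proof.
elim: k w => [|k IH] [|x w] //; try by rewrite inE eqxx.
rewrite /= ltnS => size_w /andP[x_lt w_lt]; rewrite inE; apply/orP; right.
apply: (allpairs_f (fun x w => x :: w)); first by rewrite mem_iota.
exact: IH.
Qed.

Lemma geq_trans : transitive geq.
Proof. by move=> a b c /= ba cb; apply: leq_trans cb ba. Qed.

Lemma sorted_geq_head_max x t : sorted geq (x :: t) -> all (fun y => y <= x) (x :: t).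
Proof. by move=> /= /(order_path_min geq_trans) t_le; rewrite /= leqnn. Qed.

Lemma sorted_geq_nseq_cat j v t :
  sorted geq t -> head 0 t <= v -> sorted geq (nseq j v ++ t).
Proof.
move=> t_sorted t_le; elim: j => [|j IH] //=.
rewrite (path_sortedE geq_trans) IH andbT all_cat all_nseq /= leqnn orbT /=.
case: t t_sorted t_le {IH} => [|y t] // /sorted_geq_head_max /allP le_y y_le.
by apply/allP => z /le_y /= z_le; apply: leq_trans z_le y_le.
Qed.

Lemma sorted_geq_head_block x t : sorted geq (x :: t) ->
  exists m u, x :: t = nseq m.+1 x ++ u /\ all (fun y => y < x) u.
Proof.
elim: t => [|y t IH] /=; first by exists 0, [::].
case/andP=> y_le t_sorted; have [y_eq | y_ne] := eqVneq y x.
  by subst y; have [m [u [-> u_lt]]] := IH t_sorted; exists m.+1, u.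
exists 0, (y :: t); split => //.
have /allP le_y := sorted_geq_head_max t_sorted; apply/allP => z zt.
by have := le_y z zt; move: y_le y_ne; rewrite /= => ? /eqP ? ?; lia.
Qed.

Lemma partition_cons s : is_partition s -> exists x t, s = x :: t.
Proof. by case: s => [|x t] //; exists x, t. Qed.

Lemma partition_gt0 s y : is_partition s -> y \in s -> 0 < y.
Proof. by case/and3P=> _ _ /allP; apply. Qed.

Lemma partition_le_head s y : is_partition s -> y \in s -> y <= head 0 s.
Proof. by case/and3P; case: s => [|x t] // _ /sorted_geq_head_max /allP le_x _ /le_x. Qed.

Lemma hr_pred_bounded r M s : hr_pred r M s -> all (fun x => x <= M) s && (size s <= M).
Proof.
case/and3P=> s_part /eqP <- _; have [x [t s_def]] := partition_cons s_part.
have x_gt0 : 0 < x by apply: (partition_gt0 s_part); rewrite s_def mem_head.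
apply/andP; split; last by rewrite /perimeter s_def /=; lia.
apply/allP => y ys; have := partition_le_head s_part ys.
by rewrite /perimeter s_def /= => ?; lia.
Qed.

Lemma hr_pred_perimeter_gt0 r n s : hr_pred r n s -> 0 < n.
Proof.
case/and3P=> s_part /eqP <- _; have [x [t s_def]] := partition_cons s_part.
have : 0 < x by apply: (partition_gt0 s_part); rewrite s_def mem_head.
by rewrite s_def /perimeter /=; lia.
Qed.

Definition hr_seq r n := undup (filter (hr_pred r n) (words n.+1 n)).

Lemma mem_hr_seq r n s : (s \in hr_seq r n) = hr_pred r n s.
Proof.
rewrite mem_undup mem_filter; apply/andP/idP => [[]//|hr_s]; split => //.
by have /andP[bounded size_s] := hr_pred_bounded hr_s; apply: in_words.
Qed.

Lemma uniq_hr_seq r n : uniq (hr_seq r n).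
Proof. exact: undup_uniq. Qed.

Lemma h_hr_seq r M : h r M = size (hr_seq r M).
Proof.
rewrite /h (eq_bigr (fun n : 'I_M.+1 => count (fun s => true && (size s == n)) (hr_seq r M))).
  rewrite sum_count_fibers ?count_predT // => s.
  by rewrite mem_hr_seq => /hr_pred_bounded /andP[_]; rewrite ltnS.
move=> n _; apply: card_tuple_set; [exact: uniq_hr_seq | exact: mem_hr_seq |].
by move=> s /hr_pred_bounded /andP[].
Qed.

Lemma map_partition r s (g : nat -> nat) :
  is_partition s -> mult_lt r s ->
  {homo g : a b / a >= b} -> {in s &, injective g} -> {in s, forall y, 0 < g y} ->
  is_partition (map g s) && mult_lt r (map g s).
Proof.
case/and3P=> s_nil s_sorted s_pos s_mult g_mono g_inj g_pos; apply/andP; split.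
  apply/and3P; split; first by case: s s_nil {s_sorted s_pos s_mult g_inj g_pos}.
    exact: homo_sorted s_sorted.
  by rewrite all_map; apply/allP => y ys /=; apply: g_pos.
rewrite /mult_lt all_map; apply/allP => y ys /=; rewrite count_map.
have -> : count (preim g (pred1 (g y))) s = count_mem y s.
  by apply: eq_in_count => z zs /=; apply/eqP/eqP => [/g_inj|->] //; apply.
by move/allP: s_mult => /(_ y ys).
Qed.

Definition top_gap (s : seq nat) := (1 < head 0 s) && ((head 0 s).-1 \notin s).

Definition incr_top (s : seq nat) := map (fun y => if y == head 0 s then y.+1 else y) s.

Definition decr_top (s : seq nat) := map (fun y => if y == head 0 s then y.-1 else y) s.

Lemma incr_top_hr r n s : hr_pred r n s -> hr_pred r n.+1 (incr_top s) && top_gap (incr_top s).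
Proof.
case/and3P=> s_part /eqP s_per s_mult.
have [x [t s_def]] := partition_cons s_part.
have head_s : head 0 s = x by rewrite s_def.
have le_x y : y \in s -> y <= x by move/(partition_le_head s_part); rewrite head_s.
have head_incr : head 0 (incr_top s) = x.+1 by rewrite /incr_top s_def /= eqxx.
have /andP[incr_part incr_mult] : is_partition (incr_top s) && mult_lt r (incr_top s).
  rewrite /incr_top head_s; apply: map_partition => //.
  - by move=> a b /=; case: eqP; case: eqP => ? ? ?; lia.
  - by move=> a b /le_x a_le /le_x b_le /=; case: eqP; case: eqP => ? ? ?; lia.
  - by move=> a /(partition_gt0 s_part) /=; case: eqP.
apply/andP; split.
  rewrite /hr_pred incr_part incr_mult /perimeter head_incr /incr_top size_map.
  by rewrite -s_per /perimeter s_def /=; apply/eqP; lia.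
have x_gt0 : 0 < x by apply: (partition_gt0 s_part); rewrite s_def mem_head.
rewrite /top_gap head_incr /=; apply/andP; split; first lia.
by apply/mapP => -[y ys]; rewrite head_s; have := le_x _ ys; case: eqP => ? ? ?; lia.
Qed.

Lemma incr_topK s : is_partition s -> decr_top (incr_top s) = s.
Proof.
move=> s_part; have [x [t s_def]] := partition_cons s_part.
have head_s : head 0 s = x by rewrite s_def.
have head_incr : head 0 (incr_top s) = x.+1 by rewrite /incr_top s_def /= eqxx.
have le_x y : y \in s -> y <= x by move/(partition_le_head s_part); rewrite head_s.
rewrite /decr_top head_incr /incr_top -map_comp -[RHS]map_id; apply/eq_in_map => y ys /=.
by rewrite head_s; have := le_x _ ys; case: (y =P x) => ? ?; case: eqP => ?; lia.
Qed.

Lemma decr_top_hr r n s :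
  hr_pred r n s -> top_gap s -> hr_pred r n.-1 (decr_top s) && (incr_top (decr_top s) == s).
Proof.
case/and3P=> s_part /eqP s_per s_mult /andP[x_gt1 x1_notin].
have [x [t s_def]] := partition_cons s_part.
have head_s : head 0 s = x by rewrite s_def.
rewrite head_s in x_gt1 x1_notin.
have ne_x1 y : y \in s -> y != x.-1 by move=> ys; apply: contraNneq x1_notin => <-.
have head_decr : head 0 (decr_top s) = x.-1 by rewrite /decr_top s_def /= eqxx.
have /andP[decr_part decr_mult] : is_partition (decr_top s) && mult_lt r (decr_top s).
  rewrite /decr_top head_s; apply: map_partition => //.
  - by move=> a b /=; case: eqP; case: eqP => ? ? ?; lia.
  - move=> a b /ne_x1 a_ne /ne_x1 b_ne /=; move: a_ne b_ne.
    by case: (a =P x); case: (b =P x) => ? ? ? ? ?; lia.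
  - by move=> a /(partition_gt0 s_part) /=; case: eqP => ? ?; lia.
apply/andP; split.
  rewrite /hr_pred decr_part decr_mult /perimeter head_decr /decr_top size_map.
  by rewrite -s_per /perimeter s_def /=; apply/eqP; lia.
apply/eqP; rewrite /incr_top head_decr /decr_top -map_comp -[RHS]map_id.
apply/eq_in_map => y ys /=.
by rewrite head_s; have := ne_x1 _ ys; case: (y =P x) => ? ?; case: eqP => ?; lia.
Qed.

Definition push_top j (t : seq nat) := nseq j (head 0 t).+1 ++ t.

Definition top_stair (s : seq nat) := (1 < head 0 s) && ((head 0 s).-1 \in s).

Lemma push_top_hr r n j t : hr_pred r n t -> 0 < j < r ->
  hr_pred r (n + j).+1 (push_top j t) && top_stair (push_top j t)
  && (count_mem (head 0 (push_top j t)) (push_top j t) == j).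
Proof.
case/and3P=> t_part /eqP t_per t_mult /andP[j_gt0 j_lt].
have [y [u t_def]] := partition_cons t_part.
have head_t : head 0 t = y by rewrite t_def.
have y_gt0 : 0 < y by apply: (partition_gt0 t_part); rewrite t_def mem_head.
have le_y z : z \in t -> z <= y by move/(partition_le_head t_part); rewrite head_t.
have head_push : head 0 (push_top j t) = y.+1 by rewrite /push_top head_t; case: j j_gt0 {j_lt}.
have y1_notin : y.+1 \notin t by apply/negP => /le_y; lia.
have count_y1 : count_mem y.+1 (push_top j t) = j.
  by rewrite count_cat count_nseq (count_memPn y1_notin) head_t /= eqxx; lia.
rewrite head_push count_y1 eqxx andbT /top_stair head_push /=.
rewrite mem_cat t_def mem_head orbT -t_def andbT; apply/andP; split; last lia.
case/and3P: t_part => _ t_sorted t_pos; apply/and3P; split.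
- apply/and3P; split; first by case: j j_gt0 {j_lt head_push count_y1}.
    by apply: sorted_geq_nseq_cat.
  by rewrite all_cat all_nseq t_pos orbT.
- rewrite /perimeter head_push size_cat size_nseq -t_per /perimeter head_t; apply/eqP.
  have : 0 < size t by rewrite t_def.
  lia.
apply/allP => z; have [-> | z_ne] := eqVneq z y.+1; first by rewrite count_y1.
rewrite /push_top head_t mem_cat mem_nseq (negbTE z_ne) andbF /= => zt.
rewrite count_cat count_nseq /= eq_sym (negbTE z_ne) /=.
by move/allP: t_mult => /(_ z zt).
Qed.

Lemma drop_top_hr r n j s : hr_pred r n s -> top_stair s -> count_mem (head 0 s) s = j ->
  hr_pred r (n - j).-1 (drop j s) && (push_top j (drop j s) == s).
Proof.
case/and3P=> s_part /eqP s_per s_mult /andP[x_gt1 x1_in] count_x.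
have [x [t s_def]] := partition_cons s_part.
have head_s : head 0 s = x by rewrite s_def.
rewrite head_s in x_gt1 x1_in count_x.
have [m [u [s_blocks u_lt]]] : exists m u, s = nseq m.+1 x ++ u /\ all (fun y => y < x) u.
  by rewrite s_def; apply: sorted_geq_head_block; rewrite -s_def; case/and3P: s_part.
have x_notin : x \notin u by apply/negP => /(allP u_lt); rewrite ltnn.
have j_def : j = m.+1.
  by rewrite -count_x s_blocks count_cat count_nseq (count_memPn x_notin) /= eqxx; lia.
have drop_s : drop j s = u by rewrite s_blocks j_def drop_size_cat // size_nseq.
rewrite drop_s.
have x1_in_u : x.-1 \in u.
  by move: x1_in; rewrite s_blocks mem_cat mem_nseq => /orP[/andP[_ /eqP]|//]; lia.
have [z [w u_def]] : exists z w, u = z :: w by case: (u) x1_in_u => [|z w] //; exists z, w.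
have u_sorted : sorted geq u.
  by rewrite -drop_s; apply: drop_sorted; case/and3P: s_part.
have head_u : head 0 u = x.-1.
  have := allP u_lt z; rewrite u_def mem_head => /(_ isT) z_lt_x.
  have := u_sorted; rewrite u_def => /sorted_geq_head_max /allP le_z.
  by have := x1_in_u; rewrite u_def => /le_z /=; lia.
apply/andP; split; last first.
  by rewrite /push_top head_u j_def s_blocks; apply/eqP; congr (nseq _ _ ++ _); lia.
apply/and3P; split.
- apply/and3P; split; [by rewrite u_def | exact: u_sorted |].
  by apply/allP => y yu; apply: (partition_gt0 s_part); rewrite s_blocks mem_cat yu orbT.
- move: s_per; rewrite /perimeter head_s s_blocks size_cat size_nseq head_u j_def.
  by rewrite u_def /= => ?; apply/eqP; lia.
apply/allP => y yu.
have count_le : count_mem y u <= count_mem y s by rewrite s_blocks count_cat leq_addl.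
have : count_mem y s < r by move/allP: s_mult; apply; rewrite s_blocks mem_cat yu orbT.
exact: leq_ltn_trans count_le.
Qed.

Lemma hr_pred_top_le1 r n s :
  head 0 s <= 1 -> hr_pred r n s = (s == nseq n 1) && (0 < n < r).
Proof.
move=> head_le1; apply/idP/idP => [/and3P[s_part /eqP s_per s_mult] | /andP[/eqP -> n_bd]].
  have [x [t s_def]] := partition_cons s_part.
  have all_ones : all (pred1 1) s.
    apply/allP => y ys; have := partition_gt0 s_part ys.
    by have := partition_le_head s_part ys; rewrite /= => ? ?; apply/eqP; lia.
  have x1 : x = 1 by move/allP: all_ones => /(_ x); rewrite s_def mem_head => /(_ isT) /eqP.
  have size_s : size s = n by rewrite -s_per /perimeter s_def x1 /=; lia.
  have s_ones : s = nseq n 1 by rewrite -size_s; apply/all_pred1P.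
  rewrite s_ones eqxx /=; move/allP: s_mult => /(_ 1); rewrite s_def x1 mem_head -x1 -s_def.
  by rewrite s_ones count_nseq /= -size_s s_def /= => /(_ isT); lia.
case/andP: n_bd => n_gt0 n_lt; apply/and3P; split.
- apply/and3P; split; first by case: n n_gt0 {n_lt head_le1}.
    by elim: n {n_gt0 n_lt head_le1} => [|[|n] IH] //=; rewrite leqnn.
  by rewrite all_nseq orbT.
- by rewrite /perimeter size_nseq; case: n n_gt0 {n_lt head_le1} => //= n _; rewrite add1n.
by apply/allP => y; rewrite mem_nseq => /andP[_ /eqP ->]; rewrite count_nseq /= mul1n.
Qed.

Lemma count_top_le1 r n : count (fun s => head 0 s <= 1) (hr_seq r n) = (0 < n < r).
Proof.
have head_ones : head 0 (nseq n 1) <= 1 by case: n.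
rewrite (@eq_in_count _ _ (pred1 (nseq n 1))); last first.
  move=> s; rewrite mem_hr_seq /= => hr_s; apply/idP/eqP => [head_le1 | -> //].
  by move: hr_s; rewrite hr_pred_top_le1 // => /andP[/eqP].
by rewrite count_uniq_mem ?uniq_hr_seq // mem_hr_seq hr_pred_top_le1 // eqxx.
Qed.

Lemma count_top_gap r n : count top_gap (hr_seq r n) = size (hr_seq r n.-1).
Proof.
apply: (count_eq_size_bij (f := incr_top)); try exact: uniq_hr_seq.
- move=> s1 s2; rewrite !mem_hr_seq => /and3P[s1_part _ _] /and3P[s2_part _ _] eq_incr.
  by rewrite -(incr_topK s1_part) eq_incr incr_topK.
- move=> s; rewrite mem_hr_seq => hr_s.
  have n_gt0 : 0 < n by have := hr_pred_perimeter_gt0 hr_s; lia.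
  by rewrite mem_hr_seq -(prednK n_gt0) incr_top_hr.
move=> s; rewrite mem_hr_seq => hr_s gap_s.
have /andP[hr_decr /eqP incr_decr] := decr_top_hr hr_s gap_s.
by exists (decr_top s); rewrite ?mem_hr_seq.
Qed.

Lemma count_top_stair r n j : 0 < j < r ->
  count (fun s => top_stair s && (count_mem (head 0 s) s == j)) (hr_seq r n)
  = size (hr_seq r (n - j.+1)).
Proof.
move=> j_bd.
apply: (count_eq_size_bij (f := push_top j)); try exact: uniq_hr_seq.
- move=> t1 t2 _ _ /(congr1 (drop j)).
  by rewrite !drop_size_cat ?size_nseq.
- move=> t; rewrite mem_hr_seq => hr_t; have n_gt0 := hr_pred_perimeter_gt0 hr_t.
  have /andP[/andP[]] := push_top_hr hr_t j_bd.
  by rewrite mem_hr_seq (_ : (n - j.+1 + j).+1 = n) //; [move=> -> -> -> | lia].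
move=> s; rewrite mem_hr_seq => hr_s /andP[stair_s /eqP count_s].
have /andP[hr_drop /eqP push_drop] := drop_top_hr hr_s stair_s count_s.
by exists (drop j s); rewrite ?mem_hr_seq ?subnS.
Qed.

Lemma h_rec r n : 0 < r -> h r n = \sum_(k < r) h r (n - k.+1) + (0 < n < r).
Proof.
case: r => // r _; rewrite !h_hr_seq (eq_bigr (fun k : 'I_r.+1 => size (hr_seq r.+1 (n - k.+1))));
  last by move=> k _; rewrite h_hr_seq.
set L := hr_seq r.+1 n.
have top_mult_lt : {in L, forall s, top_stair s -> count_mem (head 0 s) s < r.+1}.
  move=> s; rewrite mem_hr_seq => /and3P[s_part _ /allP s_mult] _; apply: s_mult.
  by have [x [t ->]] := partition_cons s_part; rewrite mem_head.
have no_stair0 : count (fun s => top_stair s && (count_mem (head 0 s) s == 0)) L = 0.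
  apply/eqP; rewrite -leqn0 leqNgt -has_count; apply/hasP => -[s].
  rewrite mem_hr_seq => /and3P[s_part _ _] /andP[_].
  by have [x [t ->]] := partition_cons s_part; rewrite /= eqxx.
rewrite -(count_predC (fun s => 1 < head 0 s)) addnC.
rewrite (@eq_count _ (predC _) (fun s => head 0 s <= 1)) => [|s]; last by rewrite /= -leqNgt.
rewrite count_top_le1 -(count_predI_predC _ (fun s => (head 0 s).-1 \notin s)).
rewrite (@eq_count _ (predI _ _) top_gap) => [|s]; last by rewrite /= andbC.
rewrite (@eq_count _ (predI _ _) top_stair) => [|s]; last by rewrite /= negbK andbC.
rewrite count_top_gap -(sum_count_fibers top_mult_lt) big_ord_recl no_stair0 add0n.
rewrite big_ord_recl subn1 addnC; congr (_ + _ + _); apply: eq_bigr => j _.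
by rewrite /L count_top_stair //= ltnS ltn_ord.
Qed.

Lemma h0 r : h r 0 = 0.
Proof. by rewrite h_hr_seq. Qed.

Import GRing.Theory.
Local Open Scope ring_scope.

Lemma den_coef_convolution r (g : nat -> nat) M : g 0%N = 0%N ->
  \sum_(k < M.+1) den_coef r k * (g (M - k)%N)%:Z
  = (g M)%:Z - (\sum_(k < r) g (M - k.+1))%N%:Z.
Proof.
move=> g0; rewrite big_ord_recl /den_coef /= subn0 mul1r; congr (_ + _).
rewrite -(@sum_ord_cond_widen (fun k => g (M - k.+1)%N) M) => [|k M_le].
  rewrite -natz natr_sum -sumrN [RHS]big_mkcond; apply: eq_bigr => k _ /=.
  by rewrite /bump /= add1n; case: ifP => _; rewrite ?mulN1r ?mul0r ?natz.
by rewrite (_ : (M - k.+1 = 0)%N) //; apply/eqP; rewrite subn_eq0 ltnW.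
Qed.

Theorem mainTheorem12 (r : nat) (hr : (2 <= r)%N) (M : nat) :
  \sum_(k < M.+1) den_coef r k * Hcoef r (M - k) = num_coef r M.
Proof.
have Hcoef_h n : Hcoef r n = (h r n)%:Z by rewrite /Hcoef; case: n => [|n] //=; rewrite h0.
under eq_bigr do rewrite Hcoef_h.
rewrite den_coef_convolution ?h0 // (h_rec M (ltnW hr)) PoszD addrAC subrr add0r.
by rewrite /num_coef -(prednK (ltnW hr)) ltnS; case: ifP.
Qed.
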